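(* Let $E$ be a Fréchet space, $E^*$ its topological dual with the weak$^*$ topology, $J=[a,b]$ with $a<b$, and $f,g:J\to E^*$ continuous. Then $$\int_a^b\big\{f(t)(\mu(t))+g(t)(\mu'(t))\big\}\,dt=0$$ for every $\mu\in C^1(J,E)$ with $\mu(a)=\mu(b)=0$ if and only if the map $h:J\to E^*$, $$h(t)=g(t)-\int_a^t f(s)\,ds,$$ is constant on $J$.
   Context: $C^1(J,E)$ denotes continuously differentiable curves $J\to E$. For a continuous $f:J\to E^*$, $\int_a^t f(s)\,ds$ denotes the element $l_t\in E^*$ with $l_t(e)=\int_a^t f(s)(e)\,ds$ for all $e\in E$ (this element exists). *)

From Stdlib Require Import Reals ClassicalEpsilon.
Open Scope R_scope.

(* A Fréchet space: a real vector space whose topology is given by a countable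
   separating family of seminorms (Fsemi n), complete for that topology. *)
Record Frechet := {
  Fcar :> Type;
  Fzero : Fcar;
  Fadd : Fcar -> Fcar -> Fcar;
  Fopp : Fcar -> Fcar;
  Fscal : R -> Fcar -> Fcar;
  FaddA : forall x y z, Fadd x (Fadd y z) = Fadd (Fadd x y) z;
  FaddC : forall x y, Fadd x y = Fadd y x;
  Fadd0 : forall x, Fadd x Fzero = x;
  FaddN : forall x, Fadd x (Fopp x) = Fzero;
  Fscal1 : forall x, Fscal 1 x = x;
  FscalA : forall c d x, Fscal c (Fscal d x) = Fscal (c * d) x;
  FscalDr : forall c x y, Fscal c (Fadd x y) = Fadd (Fscal c x) (Fscal c y);
  FscalDl : forall c d x, Fscal (c + d) x = Fadd (Fscal c x) (Fscal d x);
  Fsemi : nat -> Fcar -> R;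
  Fsemi_nonneg : forall n x, 0 <= Fsemi n x;
  Fsemi_triangle : forall n x y, Fsemi n (Fadd x y) <= Fsemi n x + Fsemi n y;
  Fsemi_scal : forall n c x, Fsemi n (Fscal c x) = Rabs c * Fsemi n x;
  Fsemi_sep : forall x, (forall n, Fsemi n x = 0) -> x = Fzero;
  Fcomplete : forall u : nat -> Fcar,
    (forall n eps, 0 < eps -> exists N, forall p q, (N <= p)%nat -> (N <= q)%nat ->
        Fsemi n (Fadd (u p) (Fopp (u q))) < eps) ->
    exists x, forall n eps, 0 < eps -> exists N, forall p, (N <= p)%nat ->
        Fsemi n (Fadd (u p) (Fopp x)) < eps
}.

Arguments Fzero {_}. Arguments Fadd {_}. Arguments Fopp {_}.
Arguments Fscal {_}. Arguments Fsemi {_}.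

Definition Fball {E : Frechet} (x : E) (N : nat) (delta : R) (y : E) : Prop :=
  forall n, (n <= N)%nat -> Fsemi n (Fadd y (Fopp x)) < delta.

Record dual (E : Frechet) := {
  dfun :> E -> R;
  dfun_add : forall x y, dfun (Fadd x y) = dfun x + dfun y;
  dfun_scal : forall c x, dfun (Fscal c x) = c * dfun x;
  dfun_cont : forall x eps, 0 < eps -> exists N delta, 0 < delta /\
      forall y, Fball x N delta y -> Rabs (dfun y - dfun x) < eps
}.

(* Continuity of f : J -> E^* for the weak* topology on J = [a,b]:
   the weak* topology is the initial topology of the evaluations, so this
   means every t |-> f t e is continuous on J. *)
Definition wstar_cont_on {E : Frechet} (a b : R) (f : R -> dual E) : Prop :=
  forall e : E, forall t, a <= t <= b -> forall eps, 0 < eps ->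
    exists delta, 0 < delta /\ forall s, a <= s <= b -> Rabs (s - t) < delta ->
      Rabs (f s e - f t e) < eps.

(* mu in C^1(J,E) with derivative mu' (one-sided at the endpoints),
   mu' continuous on J; limits in the topology of E. *)
Definition is_C1 {E : Frechet} (a b : R) (mu mu' : R -> E) : Prop :=
  (forall t, a <= t <= b -> forall N eps, 0 < eps ->
     exists delta, 0 < delta /\ forall h, h <> 0 -> a <= t + h <= b -> Rabs h < delta ->
       Fball (mu' t) N eps (Fscal (/ h) (Fadd (mu (t + h)) (Fopp (mu t))))) /\
  (forall t, a <= t <= b -> forall N eps, 0 < eps ->
     exists delta, 0 < delta /\ forall s, a <= s <= b -> Rabs (s - t) < delta ->
       Fball (mu' t) N eps (mu' s)).

(* Riemann integral of a real function over [a,b] (0 if not integrable;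
   all integrands used below are continuous, hence integrable). *)
Definition Rint (F : R -> R) (a b : R) : R :=
  match excluded_middle_informative (exists _ : Riemann_integrable F a b, True) with
  | left H => RiemannInt (proj1_sig (constructive_indefinite_description _ H))
  | right _ => 0
  end.

(* h(t) = g(t) - \int_a^t f(s) ds, as an element of E^* given by its values. *)
Definition hmap {E : Frechet} (a : R) (f g : R -> dual E) (t : R) (e : E) : R :=
  g t e - Rint (fun s => f s e) a t.

(* If h is constant, then g t = g a + RInt f a t, so t |-> g t (mu t) has derivative
   f t (mu t) + g t (mu' t) and the integral is g b (mu b) - g a (mu a) = 0.  Differentiating
   this composite needs the family (f t) to be equicontinuous, which is the Banach-Steinhaus
   theorem on the Frechet space E, proved from Baire's theorem.  Conversely, testing with
   mu = phi e for a scalar phi vanishing at a and b and integrating by parts gives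
   RInt (phi' * h(.) e) = 0 for all such phi, so h(.) e is constant by the du Bois-Reymond
   lemma. *)

From Stdlib Require Import Reals Lra Lia ClassicalEpsilon Classical FunctionalExtensionality.
From Coquelicot Require Import Coquelicot.
Open Scope R_scope.

Section FrechetAlgebra.

Variable E : Frechet.

Lemma Fadd0l (x : E) : Fadd Fzero x = x.
Proof. rewrite FaddC; apply Fadd0. Qed.

Lemma Fscal0 (x : E) : Fscal 0 x = Fzero.
Proof.
  assert (Hdouble : Fscal 0 x = Fadd (Fscal 0 x) (Fscal 0 x)).
  { rewrite <- FscalDl. f_equal. ring. }
  apply (f_equal (fun y => Fadd y (Fopp (Fscal 0 x)))) in Hdouble.
  rewrite FaddN, <- FaddA, FaddN, Fadd0 in Hdouble. symmetry; exact Hdouble.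
Qed.

Lemma Fopp_scal (x : E) : Fopp x = Fscal (-1) x.
Proof.
  assert (H : Fadd (Fscal (-1) x) x = Fzero).
  { rewrite <- (Fscal1 _ x) at 2. rewrite <- FscalDl.
    replace (-1 + 1) with 0 by ring. apply Fscal0. }
  rewrite <- (Fadd0 _ (Fscal (-1) x)), <- (FaddN _ x), FaddA, H, Fadd0l.
  reflexivity.
Qed.

Lemma Fopp0 : Fopp (@Fzero E) = Fzero.
Proof. rewrite Fopp_scal, <- (Fscal0 Fzero), FscalA, Rmult_0_r. reflexivity. Qed.

Lemma Fsub_split (x y z : E) :
  Fadd z (Fopp x) = Fadd (Fadd z (Fopp y)) (Fadd y (Fopp x)).
Proof.
  rewrite <- FaddA, (FaddA _ (Fopp y)), (FaddC _ (Fopp y) y), FaddN, Fadd0l.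
  reflexivity.
Qed.

Lemma FaddKl (x y : E) : Fadd (Fadd x y) (Fopp x) = y.
Proof. rewrite (FaddC _ x y), <- FaddA, FaddN, Fadd0. reflexivity. Qed.

Lemma FsubK (x y : E) : Fadd (Fadd x (Fopp y)) y = x.
Proof. rewrite <- FaddA, (FaddC _ (Fopp y) y), FaddN, Fadd0. reflexivity. Qed.

Lemma Fopp_sub (x y : E) : Fopp (Fadd x (Fopp y)) = Fadd y (Fopp x).
Proof.
  rewrite !Fopp_scal, FscalDr, FscalA.
  replace (-1 * -1) with 1 by ring. rewrite Fscal1, FaddC. reflexivity.
Qed.

Lemma Fscal_subl (c d : R) (e : E) :
  Fadd (Fscal c e) (Fopp (Fscal d e)) = Fscal (c - d) e.
Proof. rewrite Fopp_scal, FscalA, <- FscalDl. f_equal. ring. Qed.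

Lemma dual0 (l : dual E) : l Fzero = 0.
Proof. rewrite <- (Fscal0 Fzero), dfun_scal. ring. Qed.

Lemma dualB (l : dual E) (x y : E) : l (Fadd x (Fopp y)) = l x - l y.
Proof. rewrite dfun_add, Fopp_scal, dfun_scal. ring. Qed.

End FrechetAlgebra.

Arguments Fscal0 {E}.

Fixpoint Fsemi_max {E : Frechet} (N : nat) (x : E) : R :=
  match N with
  | O => Fsemi 0 x
  | S N' => Rmax (Fsemi_max N' x) (Fsemi (S N') x)
  end.

Section SemiMax.

Variable E : Frechet.
Implicit Types (x y : E) (N : nat).

Lemma Fsemi_le_max N x n : (n <= N)%nat -> Fsemi n x <= Fsemi_max N x.
Proof.
  induction N as [|N IH]; intros Hn; simpl.
  - inversion Hn; lra.
  - inversion Hn; subst; [apply Rmax_r|].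
    eapply Rle_trans; [apply IH; lia | apply Rmax_l].
Qed.

Lemma Fsemi_max_le N x d :
  (forall n, (n <= N)%nat -> Fsemi n x <= d) -> Fsemi_max N x <= d.
Proof.
  induction N as [|N IH]; intros H; simpl; [apply H; lia|].
  apply Rmax_lub; [apply IH; intros; apply H|apply H]; lia.
Qed.

Lemma Fsemi_max_lt N x d :
  (forall n, (n <= N)%nat -> Fsemi n x < d) -> Fsemi_max N x < d.
Proof.
  induction N as [|N IH]; intros H; simpl; [apply H; lia|].
  apply Rmax_lub_lt; [apply IH; intros; apply H|apply H]; lia.
Qed.

Lemma Fsemi_max_ge0 N x : 0 <= Fsemi_max N x.
Proof.
  eapply Rle_trans; [apply (Fsemi_nonneg _ 0 x)|].
  apply Fsemi_le_max; lia.
Qed.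

Lemma le_Fsemi_max N M x : (N <= M)%nat -> Fsemi_max N x <= Fsemi_max M x.
Proof. intros H. apply Fsemi_max_le; intros; apply Fsemi_le_max; lia. Qed.

Lemma Fsemi_max_triangle N x y :
  Fsemi_max N (Fadd x y) <= Fsemi_max N x + Fsemi_max N y.
Proof.
  apply Fsemi_max_le; intros n Hn.
  eapply Rle_trans; [apply Fsemi_triangle|].
  apply Rplus_le_compat; apply Fsemi_le_max; assumption.
Qed.

Lemma Fsemi_max_scal N c x : Fsemi_max N (Fscal c x) = Rabs c * Fsemi_max N x.
Proof.
  induction N as [|N IH]; simpl; [apply Fsemi_scal|].
  rewrite IH, Fsemi_scal. apply RmaxRmult, Rabs_pos.
Qed.

Lemma Fsemi_max0 N : Fsemi_max N (@Fzero E) = 0.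
Proof. rewrite <- (Fscal0 Fzero), Fsemi_max_scal, Rabs_R0. ring. Qed.

Lemma Fsemi_subC n x y : Fsemi n (Fadd x (Fopp y)) = Fsemi n (Fadd y (Fopp x)).
Proof. rewrite <- Fopp_sub, (Fopp_scal _ (Fadd y (Fopp x))), Fsemi_scal, Rabs_left by lra. ring. Qed.

Lemma Fball_Fsemi_max (x : E) N d y :
  Fball x N d y <-> Fsemi_max N (Fadd y (Fopp x)) < d.
Proof.
  split; intros H.
  - apply Fsemi_max_lt; assumption.
  - intros n Hn. eapply Rle_lt_trans; [apply Fsemi_le_max; eassumption|assumption].
Qed.

End SemiMax.

Definition cont_on (a b : R) (k : R -> R) : Prop :=
  forall t, a <= t <= b -> forall eps, 0 < eps -> exists delta, 0 < delta /\
    forall s, a <= s <= b -> Rabs (s - t) < delta -> Rabs (k s - k t) < eps.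

Definition is_deriv_on (a b : R) (k k' : R -> R) : Prop :=
  forall t, a <= t <= b -> forall eps, 0 < eps -> exists delta, 0 < delta /\
    forall s, a <= s <= b -> Rabs (s - t) < delta ->
      Rabs (k s - k t - (s - t) * k' t) <= eps * Rabs (s - t).

Lemma wstar_cont_on_eval (E : Frechet) a b (f : R -> dual E) (x : E) :
  wstar_cont_on a b f -> cont_on a b (fun s => f s x).
Proof. intros H t ht eps heps. apply H; assumption. Qed.

(* Extending by constants outside [a, b] lets us use the library on all of R. *)
Definition clamp (a b t : R) := Rmax a (Rmin b t).

Lemma clamp_in a b t : a <= b -> a <= clamp a b t <= b.
Proof. intros. unfold clamp, Rmax, Rmin. repeat destruct Rle_dec; lra. Qed.

Lemma clamp_id a b t : a <= t <= b -> clamp a b t = t.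
Proof. intros. unfold clamp, Rmax, Rmin. repeat destruct Rle_dec; lra. Qed.

Lemma clamp_lipschitz a b s t : a <= b -> Rabs (clamp a b s - clamp a b t) <= Rabs (s - t).
Proof.
  intros. unfold clamp, Rmax, Rmin. repeat destruct Rle_dec;
  unfold Rabs; repeat destruct Rcase_abs; lra.
Qed.

Section ContOn.

Variables a b : R.
Hypothesis hab : a <= b.

Lemma continuity_pt_clamp k : cont_on a b k -> forall x, continuity_pt (fun t => k (clamp a b t)) x.
Proof.
  intros hk x eps heps.
  destruct (hk (clamp a b x) (clamp_in a b x hab) eps heps) as [d [hd H]].
  exists d; split; [lra|]. intros y [_ hy]. simpl in *. unfold R_dist in *.
  apply H; [apply clamp_in; assumption|].
  eapply Rle_lt_trans; [apply clamp_lipschitz; assumption | assumption].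
Qed.

Lemma cont_on_clamp k :
  (forall x, a <= x <= b -> continuity_pt (fun t => k (clamp a b t)) x) -> cont_on a b k.
Proof.
  intros H t ht eps heps. destruct (H t ht eps heps) as [d [hd Hd]].
  exists d; split; [lra|]. intros s hs hst.
  specialize (Hd s). simpl in Hd. unfold R_dist in Hd.
  rewrite !clamp_id in Hd by assumption.
  destruct (Req_dec s t) as [->|hne].
  - rewrite Rminus_eq_0, Rabs_R0; assumption.
  - apply Hd. split; [split; [exact I|auto]|assumption].
Qed.

Lemma cont_on_plus k1 k2 : cont_on a b k1 -> cont_on a b k2 -> cont_on a b (fun t => k1 t + k2 t).
Proof.
  intros h1 h2. apply cont_on_clamp; intros.
  apply (continuity_pt_plus (fun t => k1 (clamp a b t)) (fun t => k2 (clamp a b t)));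
    apply continuity_pt_clamp; assumption.
Qed.

Lemma cont_on_minus k1 k2 : cont_on a b k1 -> cont_on a b k2 -> cont_on a b (fun t => k1 t - k2 t).
Proof.
  intros h1 h2. apply cont_on_clamp; intros.
  apply (continuity_pt_minus (fun t => k1 (clamp a b t)) (fun t => k2 (clamp a b t)));
    apply continuity_pt_clamp; assumption.
Qed.

Lemma cont_on_mult k1 k2 : cont_on a b k1 -> cont_on a b k2 -> cont_on a b (fun t => k1 t * k2 t).
Proof.
  intros h1 h2. apply cont_on_clamp; intros.
  apply (continuity_pt_mult (fun t => k1 (clamp a b t)) (fun t => k2 (clamp a b t)));
    apply continuity_pt_clamp; assumption.
Qed.

Lemma cont_on_const c : cont_on a b (fun _ => c).
Proof.
  intros t ht eps heps. exists 1; split; [lra|].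
  intros. rewrite Rminus_eq_0, Rabs_R0; assumption.
Qed.

Lemma cont_on_abs k : cont_on a b k -> cont_on a b (fun t => Rabs (k t)).
Proof.
  intros H t ht eps heps. destruct (H t ht eps heps) as [d [hd Hd]]. exists d; split; [assumption|].
  intros s hs hst. eapply Rle_lt_trans; [apply Rabs_triang_inv2|]. auto.
Qed.

Lemma ex_RInt_cont_on k t1 t2 :
  cont_on a b k -> a <= t1 <= b -> a <= t2 <= b -> ex_RInt k t1 t2.
Proof.
  intros hk h1 h2.
  apply (ex_RInt_ext (fun t => k (clamp a b t))).
  - intros x hx. rewrite clamp_id; [reflexivity|].
    unfold Rmin, Rmax in hx. destruct Rle_dec; lra.
  - apply (@ex_RInt_continuous R_CompleteNormedModule). intros z _.
    apply continuity_pt_filterlim, continuity_pt_clamp; assumption.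
Qed.

End ContOn.

Lemma Rint_RInt F a b : ex_RInt F a b -> Rint F a b = RInt F a b.
Proof.
  intros H. unfold Rint. destruct excluded_middle_informative as [e|n].
  - rewrite (RInt_Reals F a b (proj1_sig (constructive_indefinite_description _ e))).
    reflexivity.
  - exfalso. apply n. exists (ex_RInt_Reals_0 _ _ _ H). exact I.
Qed.

Lemma derivable_pt_lim_estimate F t l : derivable_pt_lim F t l ->
  forall eps, 0 < eps -> exists delta, 0 < delta /\ forall s, Rabs (s - t) < delta ->
    Rabs (F s - F t - (s - t) * l) <= eps * Rabs (s - t).
Proof.
  intros H eps heps. destruct (H eps heps) as [[d hd] Hd]. exists d; split; [assumption|].
  intros s hs. destruct (Req_dec s t) as [->|hne].
  - replace (F t - F t - (t - t) * l) with 0 by ring. rewrite Rminus_eq_0, Rabs_R0. lra.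
  - assert (hh : s - t <> 0) by lra. specialize (Hd (s - t) hh hs).
    replace (t + (s - t)) with s in Hd by ring.
    replace (F s - F t - (s - t) * l) with ((s - t) * ((F s - F t) / (s - t) - l))
      by (field; assumption).
    rewrite Rabs_mult, Rmult_comm. apply Rmult_le_compat_r; [apply Rabs_pos|lra].
Qed.

Lemma is_deriv_on_cont_on a b k k' : is_deriv_on a b k k' -> cont_on a b k.
Proof.
  intros H t ht eps heps. destruct (H t ht 1 Rlt_0_1) as [d [hd Hd]].
  set (L := 1 + Rabs (k' t)).
  assert (hL : 0 < L) by (unfold L; pose proof (Rabs_pos (k' t)); lra).
  exists (Rmin d (eps / L)). split; [apply Rmin_pos; [|apply Rdiv_lt_0_compat]; assumption|].
  intros s hs hst.
  assert (h1 : Rabs (s - t) < d) by (apply (Rlt_le_trans _ _ _ hst (Rmin_l _ _))).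
  assert (h2 : Rabs (s - t) * L < eps).
  { apply (Rmult_lt_reg_r (/ L)); [apply Rinv_0_lt_compat; assumption|].
    rewrite Rmult_assoc, Rinv_r by lra. rewrite Rmult_1_r.
    apply (Rlt_le_trans _ _ _ hst (Rmin_r _ _)). }
  specialize (Hd s hs h1).
  replace (k s - k t) with ((k s - k t - (s - t) * k' t) + (s - t) * k' t) by ring.
  eapply Rle_lt_trans; [apply Rabs_triang|]. rewrite Rabs_mult.
  unfold L in h2. lra.
Qed.

Lemma is_deriv_on_RInt a b k : a <= b -> cont_on a b k -> is_deriv_on a b (fun t => RInt k a t) k.
Proof.
  intros hab hk t ht eps heps.
  set (kc := fun t => k (clamp a b t)).
  assert (hkc : forall x, continuous kc x).
  { intros x. apply continuity_pt_filterlim, continuity_pt_clamp; assumption. }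
  assert (hd : is_derive (RInt kc a) t (kc t)).
  { apply (is_derive_RInt kc (RInt kc a) a t). apply filter_forall. intros x.
    apply (@RInt_correct R_CompleteNormedModule).
    apply (@ex_RInt_continuous R_CompleteNormedModule). intros; apply hkc.
    apply hkc. }
  apply is_derive_Reals in hd.
  destruct (derivable_pt_lim_estimate _ _ _ hd eps heps) as [d [hd0 H]].
  exists d; split; [assumption|]. intros s hs hst. specialize (H s hst).
  assert (Hkc : forall x, a <= x <= b -> RInt k a x = RInt kc a x).
  { intros x hx. apply RInt_ext. intros y hy. unfold kc. rewrite clamp_id; [reflexivity|].
    unfold Rmin, Rmax in hy. destruct Rle_dec; lra. }
  rewrite !Hkc by lra. unfold kc in H at 3. rewrite clamp_id in H by assumption. exact H.
Qed.

(* Mean value theorem for the difference, applied on the interior where it is two-sided. *)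
Lemma is_deriv_on_same_increment a b k1 k2 k' : a < b ->
  is_deriv_on a b k1 k' -> is_deriv_on a b k2 k' -> k1 b - k1 a = k2 b - k2 a.
Proof.
  intros hab h1 h2.
  set (D := fun t => k1 (clamp a b t) - k2 (clamp a b t)).
  assert (hDc : forall x, continuity_pt D x).
  { intros x. apply (continuity_pt_clamp a b ltac:(lra) (fun t => k1 t - k2 t)).
    apply cont_on_minus; [lra| |]; eapply is_deriv_on_cont_on; eassumption. }
  destruct (MVT_gen D a b (fun _ => 0)) as [c [_ hc]].
  - rewrite Rmin_left, Rmax_right by lra. intros x hx. apply is_derive_Reals.
    intros eps heps.
    destruct (h1 x ltac:(lra) (eps/4) ltac:(lra)) as [d1 [hd1 H1]].
    destruct (h2 x ltac:(lra) (eps/4) ltac:(lra)) as [d2 [hd2 H2]].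
    set (d := Rmin (Rmin d1 d2) (Rmin (x - a) (b - x))).
    assert (hpos : 0 < d) by (repeat apply Rmin_pos; lra).
    exists (mkposreal _ hpos). simpl. intros h hh hlt.
    assert (l1 := Rmin_l (Rmin d1 d2) (Rmin (x - a) (b - x))).
    assert (l2 := Rmin_r (Rmin d1 d2) (Rmin (x - a) (b - x))).
    assert (l3 := Rmin_l d1 d2). assert (l4 := Rmin_r d1 d2).
    assert (l5 := Rmin_l (x - a) (b - x)). assert (l6 := Rmin_r (x - a) (b - x)).
    fold d in l1, l2.
    assert (hxh : a <= x + h <= b) by (destruct (Rabs_def2 h d hlt); lra).
    assert (hs1 : Rabs (x + h - x) < d1) by (replace (x + h - x) with h by ring; lra).
    assert (hs2 : Rabs (x + h - x) < d2) by (replace (x + h - x) with h by ring; lra).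
    specialize (H1 (x + h) hxh hs1). specialize (H2 (x + h) hxh hs2).
    replace (x + h - x) with h in * by ring.
    unfold D. rewrite !clamp_id by lra.
    replace ((k1 (x + h) - k2 (x + h) - (k1 x - k2 x)) / h - 0)
      with (((k1 (x + h) - k1 x - h * k' x) - (k2 (x + h) - k2 x - h * k' x)) / h)
      by (field; assumption).
    assert (hh0 : 0 < Rabs h) by (apply Rabs_pos_lt; assumption).
    unfold Rdiv. rewrite Rabs_mult, Rabs_inv.
    apply (Rmult_lt_reg_r (Rabs h)); [assumption|].
    rewrite Rmult_assoc, Rinv_l, Rmult_1_r by lra.
    eapply Rle_lt_trans; [unfold Rminus at 1; apply Rabs_triang|].
    rewrite Rabs_Ropp. nra.
  - rewrite Rmin_left, Rmax_right by lra. intros; apply hDc.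
  - unfold D in hc. rewrite !clamp_id in hc by lra. lra.
Qed.

Lemma RInt_is_deriv_on a b k k' : a < b ->
  is_deriv_on a b k k' -> cont_on a b k' -> RInt k' a b = k b - k a.
Proof.
  intros hab hk hk'.
  assert (H := is_deriv_on_same_increment a b (fun t => RInt k' a t) k k' hab
    (is_deriv_on_RInt a b k' ltac:(lra) hk') hk).
  rewrite RInt_point in H. change (RInt k' a b - 0 = k b - k a) in H. lra.
Qed.

Section RIntOn.

Variables a b : R.
Hypothesis hab : a <= b.

Lemma RInt_plus_cont_on k1 k2 : cont_on a b k1 -> cont_on a b k2 ->
  RInt (fun t => k1 t + k2 t) a b = RInt k1 a b + RInt k2 a b.
Proof.
  intros h1 h2. apply (RInt_plus k1 k2); apply (ex_RInt_cont_on a b); auto; lra.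
Qed.

Lemma RInt_minus_cont_on k1 k2 t1 t2 : cont_on a b k1 -> cont_on a b k2 ->
  a <= t1 <= b -> a <= t2 <= b ->
  RInt (fun t => k1 t - k2 t) t1 t2 = RInt k1 t1 t2 - RInt k2 t1 t2.
Proof. intros. apply (RInt_minus k1 k2); apply (ex_RInt_cont_on a b); assumption. Qed.

Lemma abs_RInt_le_between k t1 t2 M : cont_on a b k -> a <= t1 <= b -> a <= t2 <= b ->
  (forall r, Rmin t1 t2 <= r <= Rmax t1 t2 -> Rabs (k r) <= M) ->
  Rabs (RInt k t1 t2) <= Rabs (t2 - t1) * M.
Proof.
  intros hk h1 h2 hM. destruct (Rle_dec t1 t2) as [hle|hlt].
  - rewrite (Rabs_pos_eq (t2 - t1)) by lra.
    apply abs_RInt_le_const; [assumption|apply (ex_RInt_cont_on a b); assumption|].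
    intros r hr. apply hM. rewrite Rmin_left, Rmax_right; lra.
  - rewrite <- (opp_RInt_swap k t2 t1) by (apply (ex_RInt_cont_on a b); assumption).
    change (Rabs (- RInt k t2 t1) <= Rabs (t2 - t1) * M).
    rewrite Rabs_Ropp, (Rabs_left (t2 - t1)) by lra.
    replace (- (t2 - t1)) with (t1 - t2) by ring.
    apply abs_RInt_le_const; [lra|apply (ex_RInt_cont_on a b); assumption|].
    intros r hr. apply hM. rewrite Rmin_right, Rmax_left; lra.
Qed.

End RIntOn.

Lemma is_deriv_on_unique a b k k1 k2 : a < b -> is_deriv_on a b k k1 -> is_deriv_on a b k k2 ->
  forall t, a <= t <= b -> k1 t = k2 t.
Proof.
  intros hab h1 h2 t ht.
  apply Rminus_diag_uniq, Rabs_eq_0, Rle_antisym; [|apply Rabs_pos].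
  apply Rnot_lt_le. intros hpos.
  set (eps := Rabs (k1 t - k2 t) / 4).
  destruct (h1 t ht eps ltac:(unfold eps; lra)) as [d1 [hd1 H1]].
  destruct (h2 t ht eps ltac:(unfold eps; lra)) as [d2 [hd2 H2]].
  set (d := Rmin (Rmin d1 d2) ((b - a) / 2) / 2).
  assert (hd0 : 0 < Rmin (Rmin d1 d2) ((b - a) / 2)) by (repeat apply Rmin_pos; lra).
  assert (l1 := Rmin_l (Rmin d1 d2) ((b - a) / 2)).
  assert (l2 := Rmin_r (Rmin d1 d2) ((b - a) / 2)).
  assert (l3 := Rmin_l d1 d2). assert (l4 := Rmin_r d1 d2).
  assert (exists s, a <= s <= b /\ Rabs (s - t) = d) as [s [hs hsd]].
  { destruct (Rle_dec (t + d) b).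
    - exists (t + d). split; [unfold d in *; lra|].
      replace (t + d - t) with d by ring. apply Rabs_pos_eq. unfold d; lra.
    - exists (t - d). split; [unfold d in *; lra|].
      replace (t - d - t) with (- d) by ring.
      rewrite Rabs_Ropp. apply Rabs_pos_eq. unfold d; lra. }
  specialize (H1 s hs ltac:(unfold d in *; lra)). specialize (H2 s hs ltac:(unfold d in *; lra)).
  assert (H : Rabs ((s - t) * (k1 t - k2 t)) <= 2 * eps * Rabs (s - t)).
  { replace ((s - t) * (k1 t - k2 t))
      with ((k s - k t - (s - t) * k2 t) - (k s - k t - (s - t) * k1 t)) by ring.
    unfold Rminus at 1. eapply Rle_trans; [apply Rabs_triang|]. rewrite Rabs_Ropp. lra. }
  rewrite Rabs_mult, hsd in H. unfold eps in H.
  assert (0 < d) by (unfold d; lra). nra.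
Qed.

(* Q t = RInt q a t is nonneg, nondecreasing and Q b = 0, so Q vanishes on [a, b]:
   then both q and 0 are derivatives of Q. *)
Lemma nonneg_RInt_eq0 a b q : a < b -> cont_on a b q -> (forall t, a <= t <= b -> 0 <= q t) ->
  RInt q a b = 0 -> forall t, a <= t <= b -> q t = 0.
Proof.
  intros hab hq hpos hint.
  assert (hex : forall t1 t2, a <= t1 <= b -> a <= t2 <= b -> ex_RInt q t1 t2)
    by (intros; apply (ex_RInt_cont_on a b); auto; lra).
  assert (HQ : forall t, a <= t <= b -> RInt q a t = 0).
  { intros t ht.
    assert (h1 : 0 <= RInt q a t)
      by (apply RInt_ge_0; [lra|apply hex; lra|intros; apply hpos; lra]).
    assert (h2 : 0 <= RInt q t b)
      by (apply RInt_ge_0; [lra|apply hex; lra|intros; apply hpos; lra]).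
    assert (h3 := RInt_Chasles q a t b (hex a t ltac:(lra) ht) (hex t b ht ltac:(lra))).
    change (RInt q a t + RInt q t b = RInt q a b) in h3. lra. }
  assert (Hzero : is_deriv_on a b (fun t => RInt q a t) (fun _ => 0)).
  { intros t ht eps heps. exists 1. split; [lra|]. intros s hs _.
    rewrite !HQ by assumption. rewrite Rminus_0_r, Rmult_0_r, Rminus_0_r, Rabs_R0.
    apply Rmult_le_pos; [lra|apply Rabs_pos]. }
  intros t ht. symmetry.
  apply (is_deriv_on_unique a b _ _ _ hab Hzero); [|assumption].
  apply is_deriv_on_RInt; [lra|assumption].
Qed.

Lemma is_deriv_on_mult a b k1 k1' k2 k2' : is_deriv_on a b k1 k1' -> is_deriv_on a b k2 k2' ->
  is_deriv_on a b (fun t => k1 t * k2 t) (fun t => k1' t * k2 t + k1 t * k2' t).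
Proof.
  intros h1 h2 t ht eps heps.
  set (M2 := Rabs (k2 t) + 1). set (L1 := Rabs (k1' t) + 1). set (K1 := Rabs (k1 t) + 1).
  assert (hM2 : 0 < M2) by (unfold M2; pose proof (Rabs_pos (k2 t)); lra).
  assert (hL1 : 0 < L1) by (unfold L1; pose proof (Rabs_pos (k1' t)); lra).
  assert (hK1 : 0 < K1) by (unfold K1; pose proof (Rabs_pos (k1 t)); lra).
  destruct (h1 t ht (eps / (3 * M2))) as [da [hda Ha]]; [apply Rdiv_lt_0_compat; lra|].
  destruct (h2 t ht (eps / (3 * K1))) as [db [hdb Hb]]; [apply Rdiv_lt_0_compat; lra|].
  destruct (is_deriv_on_cont_on a b k2 k2' h2 t ht (Rmin 1 (eps / (3 * L1)))) as [dc [hdc Hc]].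
  { apply Rmin_pos; [lra|apply Rdiv_lt_0_compat; lra]. }
  exists (Rmin da (Rmin dc db)). split; [repeat apply Rmin_pos; assumption|].
  intros s hs hst.
  assert (l1 := Rmin_l da (Rmin dc db)). assert (l2 := Rmin_r da (Rmin dc db)).
  assert (l3 := Rmin_l dc db). assert (l4 := Rmin_r dc db).
  specialize (Ha s hs ltac:(lra)). specialize (Hb s hs ltac:(lra)).
  specialize (Hc s hs ltac:(lra)).
  set (A := k1 s - k1 t - (s - t) * k1' t) in *.
  set (B := k2 s - k2 t - (s - t) * k2' t) in *.
  assert (Hc1 : Rabs (k2 s - k2 t) < 1) by (eapply Rlt_le_trans; [apply Hc|apply Rmin_l]).
  assert (Hc2 : Rabs (k2 s - k2 t) < eps / (3 * L1))
    by (eapply Rlt_le_trans; [apply Hc|apply Rmin_r]).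
  assert (Hk2s : Rabs (k2 s) <= M2).
  { unfold M2. replace (k2 s) with (k2 t + (k2 s - k2 t)) by ring.
    eapply Rle_trans; [apply Rabs_triang|]. lra. }
  replace (k1 s * k2 s - k1 t * k2 t - (s - t) * (k1' t * k2 t + k1 t * k2' t))
    with (A * k2 s + ((s - t) * k1' t * (k2 s - k2 t) + k1 t * B)) by (unfold A, B; ring).
  eapply Rle_trans; [apply Rabs_triang|].
  eapply Rle_trans; [apply Rplus_le_compat_l, Rabs_triang|].
  rewrite !Rabs_mult.
  assert (e1 : Rabs A * Rabs (k2 s) <= eps / 3 * Rabs (s - t)).
  { apply Rle_trans with (eps / (3 * M2) * Rabs (s - t) * M2).
    - apply Rmult_le_compat; auto using Rabs_pos.
    - right. field. lra. }
  assert (e2 : Rabs (s - t) * Rabs (k1' t) * Rabs (k2 s - k2 t) <= eps / 3 * Rabs (s - t)).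
  { apply Rle_trans with (Rabs (s - t) * L1 * (eps / (3 * L1))).
    - apply Rmult_le_compat; [apply Rmult_le_pos; apply Rabs_pos|apply Rabs_pos| |lra].
      apply Rmult_le_compat_l; [apply Rabs_pos|unfold L1; lra].
    - right. field. lra. }
  assert (e3 : Rabs (k1 t) * Rabs B <= eps / 3 * Rabs (s - t)).
  { apply Rle_trans with (K1 * (eps / (3 * K1) * Rabs (s - t))).
    - apply Rmult_le_compat; auto using Rabs_pos. unfold K1; lra.
    - right. field. lra. }
  lra.
Qed.

Lemma RInt_by_parts_vanishing a b phi psi U u : a < b ->
  is_deriv_on a b phi psi -> cont_on a b psi -> is_deriv_on a b U u -> cont_on a b u ->
  phi a = 0 -> phi b = 0 ->
  RInt (fun t => phi t * u t) a b = - RInt (fun t => psi t * U t) a b.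
Proof.
  intros hab hphi hpsi hU hu ha hb.
  assert (hab' : a <= b) by lra.
  assert (hphic := is_deriv_on_cont_on a b phi psi hphi).
  assert (hUc := is_deriv_on_cont_on a b U u hU).
  assert (H := RInt_is_deriv_on a b _ _ hab (is_deriv_on_mult a b _ _ _ _ hphi hU)
    (cont_on_plus a b hab' _ _ (cont_on_mult a b hab' _ _ hpsi hUc)
                               (cont_on_mult a b hab' _ _ hphic hu))).
  rewrite RInt_plus_cont_on in H by (auto using cont_on_mult).
  rewrite ha, hb in H. lra.
Qed.

(* The mean c of w is the only candidate: testing with psi = w - c, phi = RInt psi a
   gives RInt psi^2 = RInt (psi w) - c RInt psi = 0. *)
Lemma du_Bois_Reymond a b w : a < b -> cont_on a b w ->
  (forall phi psi, is_deriv_on a b phi psi -> cont_on a b psi -> phi a = 0 -> phi b = 0 ->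
     RInt (fun t => psi t * w t) a b = 0) ->
  forall t, a <= t <= b -> w t = RInt w a b / (b - a).
Proof.
  intros hab hw Hw.
  assert (hab' : a <= b) by lra.
  set (c := RInt w a b / (b - a)).
  set (psi := fun t => w t - c).
  assert (hpsi : cont_on a b psi) by (apply cont_on_minus, cont_on_const; assumption).
  assert (hpsi_int : RInt psi a b = 0).
  { unfold psi. rewrite (RInt_minus_cont_on a b hab') by (auto using cont_on_const; lra).
    rewrite RInt_const. change (RInt w a b - (b - a) * c = 0). unfold c. field. lra. }
  assert (Horth := Hw (fun t => RInt psi a t) psi (is_deriv_on_RInt a b psi hab' hpsi) hpsi
                      (RInt_point _ _) hpsi_int).
  assert (Hsq : RInt (fun t => psi t * psi t) a b = 0).
  { assert (Hsplit : RInt (fun t => psi t * psi t) a b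
                     = RInt (fun t => psi t * w t - c * psi t) a b)
      by (f_equal; apply functional_extensionality; intros; unfold psi; ring).
    rewrite Hsplit, (RInt_minus_cont_on a b hab')
      by (auto using cont_on_mult, cont_on_const; lra).
    assert (Hscal : RInt (fun t => c * psi t) a b = c * RInt psi a b)
      by (apply (RInt_scal psi a b c), (ex_RInt_cont_on a b); auto; lra).
    rewrite Horth, Hscal, hpsi_int. change (0 - c * 0 = 0 :> R). ring. }
  intros t ht.
  assert (Z := nonneg_RInt_eq0 a b _ hab (cont_on_mult a b hab' _ _ hpsi hpsi)
                 (fun s _ => Rle_0_sqr (psi s)) Hsq t ht).
  unfold psi in Z. fold c. nra.
Qed.

Section Baire.

Variable E : Frechet.

Record cball := { center : E; depth : nat; radius : R }.

Definition in_cball (B : cball) (z : E) : Prop :=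
  Fsemi_max (depth B) (Fadd z (Fopp (center B))) <= radius B.

Lemma Fsemi_dist_triangle n (x y z : E) :
  Fsemi n (Fadd x (Fopp z)) <= Fsemi n (Fadd x (Fopp y)) + Fsemi n (Fadd y (Fopp z)).
Proof. rewrite (Fsub_split E z y x). apply Fsemi_triangle. Qed.

Lemma in_cball_Fsemi (B : cball) n z :
  (n <= depth B)%nat -> in_cball B z -> Fsemi n (Fadd z (Fopp (center B))) <= radius B.
Proof. intros Hn Hz. eapply Rle_trans; [apply Fsemi_le_max, Hn|exact Hz]. Qed.

(* Cantor's intersection theorem; the depths tend to infinity, so every seminorm
   eventually controls the radius. *)
Lemma nested_cballs_meet (B : nat -> cball) :
  (forall k, 0 <= radius (B k)) -> (forall k, radius (B (S k)) <= / INR (S k)) ->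
  (forall k, (k <= depth (B (S k)))%nat) ->
  (forall k z, in_cball (B (S k)) z -> in_cball (B k) z) ->
  exists x, forall k, in_cball (B k) x.
Proof.
  intros Hpos Hrad Hdepth Hnest.
  assert (Hchain : forall j k z, in_cball (B (k + j)%nat) z -> in_cball (B k) z).
  { induction j as [|j IH]; intros k z Hz.
    - rewrite Nat.add_0_r in Hz. exact Hz.
    - apply Hnest, IH. replace (S k + j)%nat with (k + S j)%nat by lia. exact Hz. }
  assert (Hcenter : forall k p, (k <= p)%nat -> in_cball (B k) (center (B p))).
  { intros k p Hkp. apply (Hchain (p - k)%nat). replace (k + (p - k))%nat with p by lia.
    unfold in_cball. rewrite FaddN, Fsemi_max0. apply Hpos. }
  assert (Hsmall : forall n eps, 0 < eps -> exists K, (n <= depth (B K))%nat /\ radius (B K) < eps).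
  { intros n eps heps. destruct (archimed_cor1 eps heps) as [K0 [HK0 HK0pos]].
    exists (S (Nat.max n K0)). split; [specialize (Hdepth (Nat.max n K0)); lia|].
    eapply Rle_lt_trans; [apply Hrad|]. eapply Rle_lt_trans; [|exact HK0].
    apply Rinv_le_contravar; [apply lt_0_INR; lia|apply le_INR; lia]. }
  set (xs := fun p => center (B p)).
  assert (Hcauchy : forall n eps, 0 < eps -> exists M, forall p q, (M <= p)%nat -> (M <= q)%nat ->
        Fsemi n (Fadd (xs p) (Fopp (xs q))) < eps).
  { intros n eps heps. destruct (Hsmall n (eps / 2) ltac:(lra)) as [K [HKn HK]].
    exists K. intros p q hp hq.
    eapply Rle_lt_trans; [apply (Fsemi_dist_triangle n _ (center (B K)))|].
    assert (Hp := in_cball_Fsemi _ n _ HKn (Hcenter K p hp)).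
    assert (Hq := in_cball_Fsemi _ n _ HKn (Hcenter K q hq)).
    rewrite Fsemi_subC in Hq. unfold xs in *. lra. }
  destruct (Fcomplete E xs Hcauchy) as [x Hx]. exists x. intros k.
  apply Fsemi_max_le. intros n hn. apply le_epsilon. intros eps heps.
  destruct (Hx n eps heps) as [M HM]. set (p := Nat.max M k).
  specialize (HM p ltac:(unfold p; lia)).
  eapply Rle_trans; [apply (Fsemi_dist_triangle n _ (xs p))|].
  assert (Hp := in_cball_Fsemi _ n _ hn (Hcenter k p ltac:(unfold p; lia))).
  rewrite Fsemi_subC in HM. unfold xs in *. lra.
Qed.

Lemma cball_avoiding (P : E -> Prop) x N d M r :
  (forall y, ~ P y -> exists N' d', 0 < d' /\
     forall z, Fsemi_max N' (Fadd z (Fopp y)) < d' -> ~ P z) ->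
  0 < r -> (exists y, Fsemi_max N (Fadd y (Fopp x)) < d /\ ~ P y) ->
  exists B, 0 < radius B /\ radius B <= r /\ (M <= depth B)%nat /\
    forall z, in_cball B z -> Fsemi_max N (Fadd z (Fopp x)) < d /\ ~ P z.
Proof.
  intros Hopen hr [y [hy hPy]].
  destruct (Hopen y hPy) as [N1 [d1 [hd1 HN1]]].
  set (m := Fsemi_max N (Fadd y (Fopp x))) in *.
  set (d' := Rmin (Rmin (d1 / 2) ((d - m) / 2)) r).
  assert (l1 := Rmin_l (Rmin (d1 / 2) ((d - m) / 2)) r).
  assert (l2 := Rmin_r (Rmin (d1 / 2) ((d - m) / 2)) r).
  assert (l3 := Rmin_l (d1 / 2) ((d - m) / 2)). assert (l4 := Rmin_r (d1 / 2) ((d - m) / 2)).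
  fold d' in l1, l2.
  exists {| center := y; depth := Nat.max (Nat.max N N1) M; radius := d' |}.
  unfold in_cball; simpl.
  split; [unfold d'; repeat apply Rmin_pos; lra|].
  split; [assumption|]. split; [lia|].
  intros z hz. split.
  - rewrite (Fsub_split E x y z). eapply Rle_lt_trans; [apply Fsemi_max_triangle|].
    assert (Fsemi_max N (Fadd z (Fopp y)) <= d')
      by (eapply Rle_trans; [apply le_Fsemi_max|exact hz]; lia).
    fold m. lra.
  - apply HN1. eapply Rle_lt_trans; [apply (le_Fsemi_max E N1 (Nat.max (Nat.max N N1) M)); lia|].
    lra.
Qed.

Theorem Frechet_baire (P : nat -> E -> Prop) :
  (forall k y, ~ P k y -> exists N d, 0 < d /\
     forall z, Fsemi_max N (Fadd z (Fopp y)) < d -> ~ P k z) ->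
  (forall x, exists k, P k x) ->
  exists k x N d, 0 < d /\ forall y, Fsemi_max N (Fadd y (Fopp x)) < d -> P k y.
Proof.
  intros Hopen Hcover. apply NNPP. intros Hnone.
  assert (Hdense : forall k x N d, 0 < d ->
            exists y, Fsemi_max N (Fadd y (Fopp x)) < d /\ ~ P k y).
  { intros k x N d hd. apply NNPP. intros Hno. apply Hnone. exists k, x, N, d.
    split; [assumption|]. intros y hy. apply NNPP. intros hPy. apply Hno. exists y.
    split; assumption. }
  (* The hypothesis [0 < radius B] sits inside the existential so that choice yields a
     step function defined on every ball. *)
  assert (Hstep : forall k (B : cball), exists B' : cball, 0 < radius B ->
     0 < radius B' /\ radius B' <= / INR (S k) /\ (k <= depth B')%nat /\
     forall z, in_cball B' z -> in_cball B z /\ ~ P k z).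
  { intros k B. destruct (Rlt_dec 0 (radius B)) as [hr|hr]; [|exists B; intros; lra].
    destruct (cball_avoiding (P k) (center B) (depth B) (radius B) k (/ INR (S k)) (Hopen k))
      as [B' [h1 [h2 [h3 h4]]]].
    - apply Rinv_0_lt_compat, lt_0_INR. lia.
    - apply Hdense, hr.
    - exists B'. intros _. do 3 (split; [assumption|]).
      intros z hz. destruct (h4 z hz) as [hin hPz]. split; [apply Rlt_le, hin|exact hPz]. }
  pose (step k B := proj1_sig (constructive_indefinite_description _ (Hstep k B))).
  assert (Hs : forall k B, 0 < radius B -> 0 < radius (step k B) /\
     radius (step k B) <= / INR (S k) /\ (k <= depth (step k B))%nat /\
     forall z, in_cball (step k B) z -> in_cball B z /\ ~ P k z)
    by (intros k B; exact (proj2_sig (constructive_indefinite_description _ (Hstep k B)))).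
  pose (B := fix ball_seq (k : nat) : cball :=
    match k with
    | O => {| center := Fzero; depth := 0; radius := 1 |}
    | S k' => step k' (ball_seq k')
    end).
  assert (Hpos : forall k, 0 < radius (B k))
    by (induction k; [simpl; lra|apply (Hs k (B k) IHk)]).
  destruct (nested_cballs_meet B) as [x Hx].
  - intros k. apply Rlt_le, Hpos.
  - intros k. apply (Hs k (B k) (Hpos k)).
  - intros k. apply (Hs k (B k) (Hpos k)).
  - intros k z Hz. apply (Hs k (B k) (Hpos k)), Hz.
  - destruct (Hcover x) as [k Hk].
    destruct (Hs k (B k) (Hpos k)) as [_ [_ [_ Havoid]]].
    exact (proj2 (Havoid x (Hx (S k))) Hk).
Qed.

End Baire.

Lemma dual_bound_of_ball (E : Frechet) (l : dual E) N d M : 0 < d ->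
  (forall y, Fsemi_max N y < d -> Rabs (l y) <= M) ->
  forall x, Rabs (l x) <= 2 * M / d * Fsemi_max N x.
Proof.
  intros hd Hball x.
  assert (hM : 0 <= M).
  { eapply Rle_trans; [apply Rabs_pos|]. apply (Hball Fzero). rewrite Fsemi_max0. exact hd. }
  set (m := Fsemi_max N x).
  assert (hm : 0 <= m) by apply Fsemi_max_ge0.
  destruct (Req_dec m 0) as [hm0|hm0].
  - rewrite hm0, Rmult_0_r. apply Rnot_lt_le. intros hpos.
    set (lam := (M + 1) / Rabs (l x)).
    assert (hlam : 0 < lam) by (unfold lam; apply Rdiv_lt_0_compat; lra).
    assert (Hy := Hball (Fscal lam x)).
    rewrite Fsemi_max_scal, dfun_scal, Rabs_mult, (Rabs_pos_eq lam) in Hy by lra.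
    fold m in Hy. rewrite hm0 in Hy.
    assert (Hlx : lam * Rabs (l x) = M + 1) by (unfold lam; field; lra).
    specialize (Hy ltac:(lra)). lra.
  - set (lam := d / (2 * m)).
    assert (hlam : 0 < lam) by (unfold lam; apply Rdiv_lt_0_compat; lra).
    assert (Hy := Hball (Fscal lam x)).
    rewrite Fsemi_max_scal, dfun_scal, Rabs_mult, (Rabs_pos_eq lam) in Hy by lra.
    fold m in Hy.
    assert (Hlm : lam * m = d / 2) by (unfold lam; field; lra).
    specialize (Hy ltac:(lra)).
    apply (Rmult_le_reg_l lam); [assumption|].
    replace (lam * (2 * M / d * m)) with M by (unfold lam; field; lra). exact Hy.
Qed.

Section Equicontinuity.

Variables (E : Frechet) (a b : R) (f : R -> dual E).
Hypotheses (hab : a <= b) (hf : wstar_cont_on a b f).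

Lemma wstar_cont_on_bounded (x : E) : exists k : nat, forall s, a <= s <= b -> Rabs (f s x) <= INR k.
Proof.
  assert (hc := continuity_pt_clamp a b hab _ (cont_on_abs a b _ (wstar_cont_on_eval E a b f x hf))).
  destruct (continuity_ab_maj _ a b hab (fun c _ => hc c)) as [s0 [Hmax _]].
  destruct (INR_unbounded (Rabs (f (clamp a b s0) x))) as [k hk]. exists k.
  intros s hs. specialize (Hmax s hs). simpl in Hmax. rewrite clamp_id in Hmax by assumption. lra.
Qed.

(* Banach-Steinhaus: [Frechet_baire] applied to the sets {x | forall s, |f s x| <= k}. *)
Theorem wstar_cont_on_equicontinuous :
  exists N C, 0 <= C /\ forall s, a <= s <= b -> forall x, Rabs (f s x) <= C * Fsemi_max N x.
Proof.
  set (P := fun (k : nat) (x : E) => forall s, a <= s <= b -> Rabs (f s x) <= INR k).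
  destruct (Frechet_baire E P) as [k [x0 [N [d [hd Hb]]]]].
  - intros k x hnP. unfold P in hnP. apply not_all_ex_not in hnP as [s hs].
    apply imply_to_and in hs as [hs hgt]. apply Rnot_le_lt in hgt.
    destruct (dfun_cont E (f s) x (Rabs (f s x) - INR k) ltac:(lra)) as [N [d [hd Hd]]].
    exists N, d. split; [assumption|]. intros z hz hPz.
    specialize (Hd z (proj2 (Fball_Fsemi_max E x N d z) hz)). specialize (hPz s hs).
    assert (Rabs (f s x) <= Rabs (f s z) + Rabs (f s z - f s x)).
    { replace (f s x) with (f s z - (f s z - f s x)) at 1 by ring.
      unfold Rminus at 1. eapply Rle_trans; [apply Rabs_triang|]. rewrite Rabs_Ropp. lra. }
    lra.
  - apply wstar_cont_on_bounded.
  - exists N, (2 * (2 * INR k) / d). split.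
    { apply Rmult_le_pos; [pose proof (pos_INR k); lra|apply Rlt_le, Rinv_0_lt_compat, hd]. }
    intros s hs. apply dual_bound_of_ball; [assumption|].
    intros y hy.
    assert (h1 : P k (Fadd x0 y)) by (apply Hb; rewrite FaddKl; assumption).
    assert (h2 : P k x0) by (apply Hb; rewrite FaddN, Fsemi_max0; assumption).
    specialize (h1 s hs). specialize (h2 s hs). rewrite dfun_add in h1.
    replace (f s y) with ((f s x0 + f s y) - f s x0) by ring.
    unfold Rminus. eapply Rle_trans; [apply Rabs_triang|]. rewrite Rabs_Ropp. lra.
Qed.

End Equicontinuity.

Lemma dual_seminorm_bound (E : Frechet) (l : dual E) :
  exists N C, 0 <= C /\ forall x, Rabs (l x) <= C * Fsemi_max N x.
Proof.
  destruct (dfun_cont E l Fzero 1 Rlt_0_1) as [N [d [hd Hd]]].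
  exists N, (2 * 1 / d). split; [apply Rlt_le, Rdiv_lt_0_compat; lra|].
  apply dual_bound_of_ball; [assumption|].
  intros y hy. apply Rlt_le.
  assert (Hy := Hd y (proj2 (Fball_Fsemi_max E Fzero N d y) ltac:(rewrite Fopp0, Fadd0; exact hy))).
  rewrite dual0, Rminus_0_r in Hy. exact Hy.
Qed.

Definition Fcont_on {E : Frechet} (a b : R) (N : nat) (x : R -> E) : Prop :=
  forall t, a <= t <= b -> forall eps, 0 < eps -> exists delta, 0 < delta /\
    forall s, a <= s <= b -> Rabs (s - t) < delta -> Fsemi_max N (Fadd (x s) (Fopp (x t))) < eps.

Section C1Curves.

Variables (E : Frechet) (a b : R) (mu mu' : R -> E).
Hypothesis hmu : is_C1 a b mu mu'.

Lemma is_C1_lipschitz_at N t : a <= t <= b -> exists delta, 0 < delta /\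
  forall s, a <= s <= b -> Rabs (s - t) < delta ->
    Fsemi_max N (Fadd (mu s) (Fopp (mu t))) <= Rabs (s - t) * (Fsemi_max N (mu' t) + 1).
Proof.
  intros ht. destruct (proj1 hmu t ht N 1 Rlt_0_1) as [d [hd H]].
  exists d; split; [assumption|]. intros s hs hst.
  destruct (Req_dec s t) as [->|hne].
  { rewrite FaddN, Fsemi_max0, Rminus_eq_0, Rabs_R0. lra. }
  assert (hh : s - t <> 0) by lra.
  specialize (H (s - t) hh ltac:(replace (t + (s - t)) with s by ring; assumption) hst).
  replace (t + (s - t)) with s in H by ring.
  apply Fball_Fsemi_max in H.
  set (Q := Fscal (/ (s - t)) (Fadd (mu s) (Fopp (mu t)))) in *.
  assert (HQ : Fadd (mu s) (Fopp (mu t)) = Fscal (s - t) Q)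
    by (unfold Q; rewrite FscalA, Rinv_r, Fscal1 by assumption; reflexivity).
  rewrite HQ, Fsemi_max_scal. apply Rmult_le_compat_l; [apply Rabs_pos|].
  rewrite <- (FsubK E Q (mu' t)). eapply Rle_trans; [apply Fsemi_max_triangle|]. lra.
Qed.

Lemma is_C1_Fcont_on N : Fcont_on a b N mu.
Proof.
  intros t ht eps heps. destruct (is_C1_lipschitz_at N t ht) as [d [hd H]].
  set (L := Fsemi_max N (mu' t) + 1).
  assert (hL : 0 < L) by (unfold L; pose proof (Fsemi_max_ge0 E N (mu' t)); lra).
  exists (Rmin d (eps / L)). split; [apply Rmin_pos; [|apply Rdiv_lt_0_compat]; assumption|].
  intros s hs hst. eapply Rle_lt_trans; [apply H; [|apply (Rlt_le_trans _ _ _ hst (Rmin_l _ _))]; assumption|].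
  apply (Rmult_lt_reg_r (/ L)); [apply Rinv_0_lt_compat; assumption|].
  fold L. rewrite Rmult_assoc, Rinv_r, Rmult_1_r by lra.
  apply (Rlt_le_trans _ _ _ hst (Rmin_r _ _)).
Qed.

Lemma is_C1_deriv_Fcont_on N : Fcont_on a b N mu'.
Proof.
  intros t ht eps heps. destruct (proj2 hmu t ht N eps heps) as [d [hd H]].
  exists d; split; [assumption|]. intros s hs hst. apply Fball_Fsemi_max, H; assumption.
Qed.

Lemma is_deriv_on_dual_C1 (l : dual E) : is_deriv_on a b (fun s => l (mu s)) (fun s => l (mu' s)).
Proof.
  destruct (dual_seminorm_bound E l) as [N [C [hC HC]]].
  intros t ht eps heps.
  destruct (proj1 hmu t ht N (eps / (C + 1))) as [d [hd H]]; [apply Rdiv_lt_0_compat; lra|].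
  exists d; split; [assumption|]. intros s hs hst.
  destruct (Req_dec s t) as [->|hne].
  { rewrite !Rminus_eq_0, Rmult_0_l, Rminus_0_r, Rabs_R0. lra. }
  assert (hh : s - t <> 0) by lra.
  specialize (H (s - t) hh ltac:(replace (t + (s - t)) with s by ring; assumption) hst).
  replace (t + (s - t)) with s in H by ring.
  apply Fball_Fsemi_max in H.
  set (Q := Fscal (/ (s - t)) (Fadd (mu s) (Fopp (mu t)))) in *.
  replace (l (mu s) - l (mu t) - (s - t) * l (mu' t)) with ((s - t) * l (Fadd Q (Fopp (mu' t))))
    by (unfold Q; rewrite dualB, dfun_scal, dualB; field; assumption).
  rewrite Rabs_mult, Rmult_comm. apply Rmult_le_compat_r; [apply Rabs_pos|].
  eapply Rle_trans; [apply HC|].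
  apply Rle_trans with (C * (eps / (C + 1))); [apply Rmult_le_compat_l; lra|].
  apply Rle_trans with ((C + 1) * (eps / (C + 1))); [|right; field; lra].
  apply Rmult_le_compat_r; [apply Rlt_le, Rdiv_lt_0_compat|]; lra.
Qed.

End C1Curves.

Lemma is_C1_scal (E : Frechet) a b (phi psi : R -> R) (e : E) :
  is_deriv_on a b phi psi -> cont_on a b psi ->
  is_C1 a b (fun t => Fscal (phi t) e) (fun t => Fscal (psi t) e).
Proof.
  intros hd hc. assert (hM := Fsemi_max_ge0 E).
  split; intros t ht N eps heps; specialize (hM N e);
    set (eps' := eps / (Fsemi_max N e + 1));
    assert (heps' : 0 < eps') by (apply Rdiv_lt_0_compat; lra);
    assert (Hsmall : eps' * Fsemi_max N e < eps)
      by (assert (eps' * (Fsemi_max N e + 1) = eps) by (unfold eps'; field; lra); lra).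
  - destruct (hd t ht eps' heps') as [d [hd0 H]].
    exists d; split; [assumption|]. intros h hh hth hlt.
    specialize (H (t + h) hth ltac:(replace (t + h - t) with h by ring; assumption)).
    replace (t + h - t) with h in H by ring.
    apply Fball_Fsemi_max. rewrite Fscal_subl, FscalA, Fscal_subl, Fsemi_max_scal.
    assert (hq : Rabs (/ h * (phi (t + h) - phi t) - psi t) <= eps').
    { replace (/ h * (phi (t + h) - phi t) - psi t)
        with (/ h * (phi (t + h) - phi t - h * psi t)) by (field; assumption).
      rewrite Rabs_mult, Rabs_inv.
      apply (Rmult_le_reg_l (Rabs h)); [apply Rabs_pos_lt; assumption|].
      rewrite <- Rmult_assoc, Rinv_r, Rmult_1_l by (apply Rabs_no_R0; assumption). lra. }
    eapply Rle_lt_trans; [apply Rmult_le_compat_r; [apply hM|exact hq]|exact Hsmall].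
  - destruct (hc t ht eps' heps') as [d [hd0 H]].
    exists d; split; [assumption|]. intros s hs hst. specialize (H s hs hst).
    apply Fball_Fsemi_max. rewrite Fscal_subl, Fsemi_max_scal.
    eapply Rle_lt_trans; [apply Rmult_le_compat_r; [apply hM|apply Rlt_le, H]|exact Hsmall].
Qed.

Section WstarEval.

Variables (E : Frechet) (a b : R) (f : R -> dual E).
Hypotheses (hab : a <= b) (hf : wstar_cont_on a b f).

Lemma wstar_eval_joint_cont (x : R -> E) N C : 0 <= C ->
  (forall s, a <= s <= b -> forall y, Rabs (f s y) <= C * Fsemi_max N y) -> Fcont_on a b N x ->
  forall t, a <= t <= b -> forall eps, 0 < eps -> exists delta, 0 < delta /\
    forall r s, a <= r <= b -> a <= s <= b -> Rabs (r - t) < delta -> Rabs (s - t) < delta ->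
      Rabs (f r (x s) - f t (x t)) < eps.
Proof.
  intros hC Hbound hx t ht eps heps.
  destruct (hx t ht (eps / (2 * (C + 1)))) as [d1 [hd1 H1]]; [apply Rdiv_lt_0_compat; lra|].
  destruct (hf (x t) t ht (eps / 2)) as [d2 [hd2 H2]]; [lra|].
  exists (Rmin d1 d2). split; [apply Rmin_pos; assumption|].
  intros r s hr hs hrt hst.
  specialize (H1 s hs (Rlt_le_trans _ _ _ hst (Rmin_l _ _))).
  specialize (H2 r hr (Rlt_le_trans _ _ _ hrt (Rmin_r _ _))).
  replace (f r (x s) - f t (x t)) with (f r (Fadd (x s) (Fopp (x t))) + (f r (x t) - f t (x t)))
    by (rewrite dualB; ring).
  eapply Rle_lt_trans; [apply Rabs_triang|].
  assert (Rabs (f r (Fadd (x s) (Fopp (x t)))) <= C * (eps / (2 * (C + 1)))).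
  { eapply Rle_trans; [apply Hbound; assumption|]. apply Rmult_le_compat_l; lra. }
  assert (C * (eps / (2 * (C + 1))) <= eps / 2).
  { replace (eps / 2) with ((C + 1) * (eps / (2 * (C + 1)))) by (field; lra).
    apply Rmult_le_compat_r; [apply Rlt_le, Rdiv_lt_0_compat|]; lra. }
  lra.
Qed.

Lemma wstar_eval_cont_on (x : R -> E) N C : 0 <= C ->
  (forall s, a <= s <= b -> forall y, Rabs (f s y) <= C * Fsemi_max N y) -> Fcont_on a b N x ->
  cont_on a b (fun t => f t (x t)).
Proof.
  intros hC Hbound hx t ht eps heps.
  destruct (wstar_eval_joint_cont x N C hC Hbound hx t ht eps heps) as [d [hd H]].
  exists d. split; [assumption|]. intros s hs hst. apply H; assumption.
Qed.

(* g s (mu s) - g t (mu t) splits into [RInt (f r (mu s)) t s], which joint continuity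
   makes (s - t) f t (mu t) + o(s - t), and g t (mu s) - g t (mu t). *)
Lemma is_deriv_on_wstar_eval_C1 (g : R -> dual E) (mu mu' : R -> E) :
  (forall s t, a <= s <= b -> a <= t <= b -> forall x, g s x - g t x = RInt (fun r => f r x) t s) ->
  is_C1 a b mu mu' ->
  is_deriv_on a b (fun t => g t (mu t)) (fun t => f t (mu t) + g t (mu' t)).
Proof.
  intros Hincr hmu t ht eps heps.
  destruct (wstar_cont_on_equicontinuous E a b f hab hf) as [N [C [hC Hbound]]].
  destruct (is_deriv_on_dual_C1 E a b mu mu' hmu (g t) t ht (eps / 2)) as [d1 [hd1 H1]]; [lra|].
  destruct (wstar_eval_joint_cont mu N C hC Hbound (is_C1_Fcont_on E a b mu mu' hmu N) t ht (eps / 2))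
    as [d2 [hd2 H2]]; [lra|].
  exists (Rmin d1 d2). split; [apply Rmin_pos; assumption|]. intros s hs hst.
  specialize (H1 s hs (Rlt_le_trans _ _ _ hst (Rmin_l _ _))). simpl in H1.
  set (c := f t (mu t)).
  assert (Hint : g s (mu s) - g t (mu s) - (s - t) * c = RInt (fun r => f r (mu s) - c) t s).
  { rewrite Hincr, (RInt_minus_cont_on a b hab), RInt_const by
      (auto using cont_on_const, wstar_cont_on_eval). reflexivity. }
  assert (Hint_small : Rabs (RInt (fun r => f r (mu s) - c) t s) <= Rabs (s - t) * (eps / 2)).
  { apply (abs_RInt_le_between a b hab); try assumption.
    { apply (cont_on_minus a b hab (fun r => f r (mu s)) (fun _ => c)).
      - apply wstar_cont_on_eval, hf.
      - apply cont_on_const. }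
    intros r hr.
    assert (hrJ : a <= r <= b) by (unfold Rmin, Rmax in hr; destruct Rle_dec; lra).
    assert (hrt : Rabs (r - t) <= Rabs (s - t))
      by (unfold Rmin, Rmax in hr; destruct Rle_dec; unfold Rabs; repeat destruct Rcase_abs; lra).
    assert (hsd2 : Rabs (s - t) < d2) by apply (Rlt_le_trans _ _ _ hst (Rmin_r _ _)).
    apply Rlt_le, H2; assumption || lra. }
  replace (g s (mu s) - g t (mu t) - (s - t) * (c + g t (mu' t)))
    with ((g s (mu s) - g t (mu s) - (s - t) * c)
          + (g t (mu s) - g t (mu t) - (s - t) * g t (mu' t))) by ring.
  rewrite Hint. eapply Rle_trans; [apply Rabs_triang|]. lra.
Qed.

End WstarEval.

Section Proposition5.

Variables (E : Frechet) (a b : R) (f g : R -> dual E).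
Hypotheses (hab : a < b) (hf : wstar_cont_on a b f) (hg : wstar_cont_on a b g).

Let hab' : a <= b := Rlt_le a b hab.

Lemma hmap_RInt t e : a <= t <= b -> hmap a f g t e = g t e - RInt (fun s => f s e) a t.
Proof.
  intros ht. unfold hmap. rewrite Rint_RInt; [reflexivity|].
  apply (ex_RInt_cont_on a b hab'); [apply wstar_cont_on_eval, hf|lra|assumption].
Qed.

Lemma hmap_const_increment :
  (forall t1 t2, a <= t1 <= b -> a <= t2 <= b -> forall e, hmap a f g t1 e = hmap a f g t2 e) ->
  forall s t, a <= s <= b -> a <= t <= b -> forall x, g s x - g t x = RInt (fun r => f r x) t s.
Proof.
  intros HC s t hs ht x. specialize (HC s t hs ht x). rewrite !hmap_RInt in HC by assumption.
  assert (hex : forall t1 t2, a <= t1 <= b -> a <= t2 <= b -> ex_RInt (fun r => f r x) t1 t2)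
    by (intros; apply (ex_RInt_cont_on a b hab'); [apply wstar_cont_on_eval, hf| |]; assumption).
  assert (H := RInt_Chasles (fun r => f r x) a t s (hex a t ltac:(lra) ht) (hex t s ht hs)).
  change (RInt (fun r => f r x) a t + RInt (fun r => f r x) t s = RInt (fun r => f r x) a s) in H.
  lra.
Qed.

Lemma hmap_const_action_vanishes :
  (forall t1 t2, a <= t1 <= b -> a <= t2 <= b -> forall e, hmap a f g t1 e = hmap a f g t2 e) ->
  forall mu mu' : R -> E, is_C1 a b mu mu' -> mu a = Fzero -> mu b = Fzero ->
    Rint (fun t => f t (mu t) + g t (mu' t)) a b = 0.
Proof.
  intros HC mu mu' hmu ha hb.
  destruct (wstar_cont_on_equicontinuous E a b f hab' hf) as [Nf [Cf [hCf Hf]]].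
  destruct (wstar_cont_on_equicontinuous E a b g hab' hg) as [Ng [Cg [hCg Hg]]].
  assert (hcont : cont_on a b (fun t => f t (mu t) + g t (mu' t))).
  { apply (cont_on_plus a b hab').
    - apply (wstar_eval_cont_on E a b f hf mu Nf Cf hCf Hf), (is_C1_Fcont_on E a b mu mu' hmu).
    - apply (wstar_eval_cont_on E a b g hg mu' Ng Cg hCg Hg), (is_C1_deriv_Fcont_on E a b mu mu' hmu). }
  rewrite Rint_RInt by (apply (ex_RInt_cont_on a b hab'); assumption || lra).
  rewrite (RInt_is_deriv_on a b (fun t => g t (mu t))); [|assumption| |assumption].
  - rewrite ha, hb, !dual0. ring.
  - apply (is_deriv_on_wstar_eval_C1 E a b f hab' hf); [|assumption].
    apply hmap_const_increment, HC.
Qed.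

Lemma action_vanishes_hmap_mean :
  (forall mu mu' : R -> E, is_C1 a b mu mu' -> mu a = Fzero -> mu b = Fzero ->
     Rint (fun t => f t (mu t) + g t (mu' t)) a b = 0) ->
  forall e t, a <= t <= b -> g t e - RInt (fun s => f s e) a t
    = RInt (fun s => g s e - RInt (fun r => f r e) a s) a b / (b - a).
Proof.
  intros HI e.
  set (u := fun s => f s e). set (v := fun s => g s e). set (U := fun t => RInt u a t).
  assert (hu : cont_on a b u) by apply (wstar_cont_on_eval E a b f e hf).
  assert (hv : cont_on a b v) by apply (wstar_cont_on_eval E a b g e hg).
  assert (hU : is_deriv_on a b U u) by (apply is_deriv_on_RInt; assumption).
  assert (hUc := is_deriv_on_cont_on a b U u hU).
  apply (du_Bois_Reymond a b (fun t => v t - U t) hab (cont_on_minus a b hab' _ _ hv hUc)).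
  intros phi psi hphi hpsi ha hb.
  assert (hphic := is_deriv_on_cont_on a b phi psi hphi).
  assert (Haction := HI _ _ (is_C1_scal E a b phi psi e hphi hpsi)).
  cbv beta in Haction. rewrite ha, hb, Fscal0 in Haction.
  specialize (Haction eq_refl eq_refl).
  assert (Hint : (fun t => f t (Fscal (phi t) e) + g t (Fscal (psi t) e))
                 = (fun t => phi t * u t + psi t * v t))
    by (apply functional_extensionality; intros; unfold u, v; rewrite !dfun_scal; reflexivity).
  rewrite Hint, Rint_RInt in Haction
    by (apply (ex_RInt_cont_on a b hab'); [|lra|lra];
        apply cont_on_plus; auto using cont_on_mult).
  rewrite RInt_plus_cont_on in Haction by (auto using cont_on_mult).
  rewrite (RInt_by_parts_vanishing a b phi psi U u hab hphi hpsi hU hu ha hb) in Haction.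
  assert (Hsplit : RInt (fun t => psi t * (v t - U t)) a b
                   = RInt (fun t => psi t * v t - psi t * U t) a b)
    by (f_equal; apply functional_extensionality; intros; ring).
  rewrite Hsplit, (RInt_minus_cont_on a b hab') by (auto using cont_on_mult; lra).
  lra.
Qed.

End Proposition5.

Theorem proposition5 (E : Frechet) (a b : R) (f g : R -> dual E)
  (hab : a < b) (hf : wstar_cont_on a b f) (hg : wstar_cont_on a b g) :
  (forall mu mu' : R -> E, is_C1 a b mu mu' -> mu a = Fzero -> mu b = Fzero ->
     Rint (fun t => f t (mu t) + g t (mu' t)) a b = 0)
  <->
  (forall t1 t2, a <= t1 <= b -> a <= t2 <= b ->
     forall e : E, hmap a f g t1 e = hmap a f g t2 e).
Proof.
  split.
  - intros HI t1 t2 h1 h2 e.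
    rewrite !(hmap_RInt E a b f g hab hf), !(action_vanishes_hmap_mean E a b f g hab hf hg HI e) by assumption.
    reflexivity.
  - exact (hmap_const_action_vanishes E a b f g hab hf hg).
Qed.
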